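(* Let $\mathcal{L}$ be a set of lines of $\mathsf{PG}(7,q^3)$ satisfying (Pt): every point of $\mathsf{PG}(7,q^3)$ is incident with $0$ or $q+1$ elements of $\mathcal{L}$; (Pl): every plane contains $0$, $1$ or $q+1$ elements of $\mathcal{L}$; (Sd): every solid contains $0,1,q+1$ or $2q+1$ elements of $\mathcal{L}$; and (4d'): every $4$-dimensional subspace contains at most $q^2+2q+1$ elements of $\mathcal{L}$. Then no five lines of $\mathcal{L}$ form a pentagon.
   Context: A pentagon is a set of five lines $L_1,\dots,L_5$ such that $L_i$ meets $L_{i+1}$ (indices mod $5$) and the five intersection points are pairwise distinct. *)

From HB Require Import structures.
From mathcomp Require Import all_boot all_order all_algebra all_field.
Set Implicit Arguments. Unset Strict Implicit. Unset Printing Implicit Defensive.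
Import GRing.Theory.
Local Open Scope ring_scope.

(* PG(7, F): projective subspaces of projective dimension k are the
   vector subspaces of dimension k+1 of the 8-dimensional row space F^8. *)
Notation PGspace F := {vspace 'rV[F]_8}.

Definition nb_in (F : fieldType) (L : seq (PGspace F)) (S : PGspace F) : nat :=
  count (fun l => (l <= S)%VS) L.

Definition pentagon (F : fieldType) (f : 'I_5 -> PGspace F) : Prop :=
  (forall i : 'I_5, \dim (f i) = 2%N) /\
  (forall i : 'I_5, \dim (f i :&: f (ordS i))%VS = 1%N) /\
  (forall i j : 'I_5, i != j ->
     (f i :&: f (ordS i))%VS != (f j :&: f (ordS j))%VS).

From HB Require Import structures.
From mathcomp Require Import all_boot all_order all_algebra all_field.
From mathcomp Require Import zify.
Local Open Scope ring_scope.

(* If two lines of L meet in a point X, the q+1 lines of L through X are exactly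
   the lines of L in the plane they span.  The five corner planes of a pentagon
   Q0 ... Q4 are thus pencils centred at the vertices; any two of them share at
   most a side, so together they hold at least 5q lines, and the pentagon spans
   a 4-space S.  Each of the q-1 remaining lines m of the pencil at Q0 spans with
   the opposite side Q2Q3 a solid holding at least q-1 further lines, lying in
   none of the corner planes and off the plane <Q0, Q2Q3>, which is where two
   such solids meet.  Hence S holds at least 5q + (q-1)^2 = q^2 + 3q + 1 lines,
   against (4d'). *)

Section VectorGeometry.
Context {K : fieldType} {vT : vectType K}.
Implicit Types U V P l : {vspace vT}.

Lemma subv_eq_dim {U V} : (U <= V)%VS -> (\dim V <= \dim U)%N -> U = V.
Proof. by move=> sUV leVU; apply/eqP; rewrite eqEdim sUV. Qed.

Lemma ltn_dimv_cap {U V} : \dim U = \dim V -> U != V -> (\dim (U :&: V) < \dim U)%N.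
Proof.
move=> eqUV neqUV; rewrite ltn_neqAle dimvS ?capvSl // andbT.
apply: contra neqUV => /eqP eq_cap.
have sUV : (U <= V)%VS by rewrite -(subv_eq_dim (capvSl U V)) ?eq_cap // capvSr.
by rewrite eqEdim sUV eqUV leqnn.
Qed.

Lemma dimv_add_point {U P} : \dim P = 1%N -> ~~ (P <= U)%VS -> \dim (U + P) = (\dim U).+1.
Proof.
move=> dP nPU; have := dimv_sum_cap U P.
suff -> : \dim (U :&: P) = 0%N by rewrite dP; lia.
have := dimvS (capvSr U P); rewrite dP leq_eqVlt ltnS leqn0 => /orP[/eqP dcap|/eqP //].
by move: nPU; rewrite -(subv_eq_dim (capvSr U P)) ?dcap ?dP ?capvSl.
Qed.

Lemma lines_meet_point {l l' P} : \dim l = 2%N -> \dim l' = 2%N -> l != l' ->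
  \dim P = 1%N -> (P <= l)%VS -> (P <= l')%VS -> (l :&: l')%VS = P.
Proof.
move=> dl dl' nll' dP Pl Pl'; symmetry; apply: subv_eq_dim; first by rewrite subv_cap Pl Pl'.
by have := ltn_dimv_cap (etrans dl (esym dl')) nll'; rewrite dl dP.
Qed.

Lemma dimv_add_lines_meet {l l' P} : \dim l = 2%N -> \dim l' = 2%N -> l != l' ->
  \dim P = 1%N -> (P <= l)%VS -> (P <= l')%VS -> \dim (l + l') = 3%N.
Proof.
move=> dl dl' nll' dP Pl Pl'; have := dimv_sum_cap l l'.
by rewrite (lines_meet_point dl dl' nll' dP Pl Pl') dl dl' dP; lia.
Qed.

Lemma line_eq_add_points {l P P'} : \dim l = 2%N -> \dim P = 1%N -> \dim P' = 1%N ->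
  P != P' -> (P <= l)%VS -> (P' <= l)%VS -> l = (P + P')%VS.
Proof.
move=> dl dP dP' nPP' Pl P'l; symmetry; apply: subv_eq_dim; first by rewrite subv_add Pl P'l.
have nP'P : ~~ (P' <= P)%VS.
  by apply: contra nPP' => P'P; rewrite eq_sym eqEdim P'P dP dP'.
by rewrite dimv_add_point // dl dP.
Qed.

Lemma add_lines_plane {l l' P} : \dim l = 2%N -> \dim l' = 2%N -> l != l' ->
  \dim P = 3%N -> (l <= P)%VS -> (l' <= P)%VS -> (l + l')%VS = P.
Proof.
move=> dl dl' nll' dP lP l'P; apply: subv_eq_dim; first by rewrite subv_add lP l'P.
have := ltn_dimv_cap (etrans dl (esym dl')) nll'; have := dimv_sum_cap l l'.
by rewrite dl dl' dP; lia.
Qed.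

End VectorGeometry.

Section CountingType.
Context {T : Type}.
Implicit Types (a b : pred T) (s : seq T).

Lemma count_predU_ge a b s k : (count (predI a b) s <= k)%N ->
  (count a s + count b s <= count (predU a b) s + k)%N.
Proof. by rewrite -count_predUI; lia. Qed.

Lemma count_split a b s :
  count a s = (count (fun x => a x && b x) s + count (fun x => a x && ~~ b x) s)%N.
Proof. by elim: s => //= x s ->; case: (a x); case: (b x) => /=; lia. Qed.

End CountingType.

Section Counting.
Context {T : eqType}.
Implicit Types (a b : pred T) (s xs : seq T).

Lemma count_le_size a s xs : uniq s -> (forall x, x \in s -> a x -> x \in xs) ->
  (count a s <= size xs)%N.
Proof.
move=> us axs; rewrite -size_filter; apply: uniq_leq_size; first exact: filter_uniq.
by move=> x; rewrite mem_filter => /andP[ax xs_]; apply: axs.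
Qed.

Lemma size_le_count a s xs : uniq xs -> (forall x, x \in xs -> a x && (x \in s)) ->
  (size xs <= count a s)%N.
Proof.
move=> uxs xsa; rewrite -size_filter; apply: uniq_leq_size => // x /xsa.
by rewrite mem_filter.
Qed.

Lemma count_predU_disjoint a b s : {in s, forall x, a x -> b x -> False} ->
  count (predU a b) s = (count a s + count b s)%N.
Proof.
move=> dab; rewrite -count_predUI -[LHS]addn0; congr (_ + _)%N.
rewrite -(count_pred0 s); apply: eq_in_count => x xs /=.
by apply/esym/negbTE/andP => -[/(dab x xs)].
Qed.

Lemma sub_in_count a1 a2 s : {in s, forall x, a1 x -> a2 x} -> (count a1 s <= count a2 s)%N.
Proof.
elim: s => //= x s IHs sub12; apply: leq_add.
  by case a1x: (a1 x); rewrite // (sub12 x (mem_head x s) a1x).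
by apply: IHs => y ys; apply: sub12; rewrite inE ys orbT.
Qed.

Lemma count_has_disjoint (I : eqType) (C : I -> pred T) (r : seq I) s : uniq r ->
  (forall i j x, i \in r -> j \in r -> i != j -> C i x -> C j x -> False) ->
  count (fun x => has (C^~ x) r) s = \sum_(i <- r) count (C i) s.
Proof.
elim: r => [|i r IHr] /=; first by rewrite big_nil; elim: s.
move=> /andP[nir ur] disj; rewrite big_cons -IHr //; last first.
  by move=> j k x jr kr; apply: disj; rewrite inE ?jr ?kr orbT.
apply: count_predU_disjoint => x _ Cix /hasP[j jr Cjx].
apply: (disj i j x) => //; rewrite ?inE ?eqxx ?jr ?orbT //.
by apply: contraNneq nir => ->.
Qed.

End Counting.

Lemma sum_ge_size (I : eqType) (r : seq I) (F : I -> nat) k :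
  (forall i, i \in r -> k <= F i)%N -> (k * size r <= \sum_(i <- r) F i)%N.
Proof.
move=> kF; rewrite -iter_addn_0 -count_predT -big_const_seq big_seq_cond.
rewrite [X in (_ <= X)%N]big_seq_cond; apply: leq_sum => i /andP[ir _]; exact: kF.
Qed.

Ltac subv_span :=
  match goal with
  | |- is_true ((_ + _ <= _)%VS) => rewrite subv_add; apply/andP; split; subv_span
  | |- is_true ((?U <= ?U)%VS) => exact: subvv
  | H : is_true ((?U <= ?V)%VS) |- is_true ((?U <= ?V)%VS) => exact: H
  | |- is_true ((_ <= ?A + _)%VS) => apply: (subv_trans _ (addvSl A _)); subv_span
  | |- is_true ((_ <= _ + ?B)%VS) => apply: (subv_trans _ (addvSr _ B)); subv_span
  | H : is_true ((?U <= ?V)%VS) |- is_true ((_ <= ?V)%VS) => apply: (subv_trans _ H); subv_span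
  end.

(* [lia] tries to interpret every boolean hypothesis, which is very slow on
   subspace inclusions; only arithmetic booleans are kept. *)
Ltac nat_lia :=
  repeat match goal with
  | H : is_true ?b |- _ =>
      lazymatch b with
      | (_ <= _)%N => fail
      | _ => clear H
      end
  end; lia.

Lemma nb_in_predI {F : fieldType} (L : seq (PGspace F)) (S : PGspace F)
    (P : pred (PGspace F)) :
  nb_in L S = (count (fun l => (l <= S)%VS && P l) L +
               count (fun l => (l <= S)%VS && ~~ P l) L)%N.
Proof. exact: count_split. Qed.

Lemma nb_in_split {F : fieldType} (L : seq (PGspace F)) {S P : PGspace F} : (P <= S)%VS ->
  nb_in L S = (nb_in L P + count (fun l => (l <= S)%VS && ~~ (l <= P)%VS) L)%N.
Proof.
move=> PS; rewrite (nb_in_predI L S (fun l => l <= P)%VS); congr (_ + _)%N.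
apply: eq_count => l /=; apply/andP/idP => [[] //|lP]; split => //.
exact: subv_trans lP PS.
Qed.

Section PentagonSides.
Context {F : fieldType} {f : 'I_5 -> PGspace F}.
Hypothesis pf : pentagon f.

Lemma pentagon_neq_next i : f i != f (ordS i).
Proof.
have [f_lines [f_meet _]] := pf.
by apply/eqP => eq_next; have := f_meet i; rewrite -eq_next capvv f_lines.
Qed.

Lemma pentagon_side i :
  f (ordS i) = ((f i :&: f (ordS i)) + (f (ordS i) :&: f (ordS (ordS i))))%VS.
Proof.
have [f_lines [f_meet f_distinct]] := pf.
apply: line_eq_add_points; rewrite ?f_lines ?f_meet ?capvSr ?capvSl //.
by apply: f_distinct; case: i => -[|[|[|[|[|i]]]]].
Qed.

End PentagonSides.

Definition in_some {F : fieldType} (Ps : seq (PGspace F)) (l : PGspace F) : bool :=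
  has (fun P => (l <= P)%VS) Ps.

Lemma predn_sqr {n} : (0 < n)%N -> (n.-1 * n.-1 + 2 * n = n ^ 2 + 1)%N.
Proof. by case: n => // n _; rewrite succnK; nia. Qed.

Section LineSet.
Context {F : fieldType} {q : nat} {L : seq (PGspace F)}.
Hypotheses (Luniq : uniq L) (Llines : forall l, l \in L -> \dim l = 2%N).
Hypothesis Pt : forall P : PGspace F, \dim P = 1%N ->
  count (fun l => (P <= l)%VS) L \in [:: 0%N; q.+1].
Hypothesis Pl : forall S : PGspace F, \dim S = 3%N -> nb_in L S \in [:: 0%N; 1%N; q.+1].
Hypothesis Sd : forall S : PGspace F, \dim S = 4%N ->
  nb_in L S \in [:: 0%N; 1%N; q.+1; (2 * q).+1].
Hypothesis q_gt1 : (1 < q)%N.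

Implicit Types a b c l m n A B C D S : PGspace F.

Lemma nb_in_plane {S a b} : \dim S = 3%N -> a \in L -> b \in L -> a != b ->
  (a <= S)%VS -> (b <= S)%VS -> nb_in L S = q.+1.
Proof.
move=> dS aL bL nab aS bS.
have : (2 <= nb_in L S)%N.
  apply: (size_le_count _ _ [:: a; b]); first by rewrite /= inE nab.
  by move=> x; rewrite !inE => /orP[]/eqP->; rewrite ?aS ?aL ?bS ?bL.
by have := Pl _ dS; rewrite !inE => /or3P[]/eqP->.
Qed.

Lemma nb_in_solid {S} : \dim S = 4%N -> (q.+2 <= nb_in L S)%N -> nb_in L S = (2 * q).+1.
Proof. by move=> dS; have := Sd _ dS; rewrite !inE => /or4P[]/eqP->; nat_lia. Qed.

Lemma line_eq_add {l A B} : l \in L -> (A + B)%VS \in L ->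
  (A <= l)%VS -> (B <= l)%VS -> l = (A + B)%VS.
Proof.
move=> lL ABL Al Bl; symmetry; apply: subv_eq_dim; first by rewrite subv_add Al Bl.
by rewrite !Llines.
Qed.

Lemma count_in_some_cons P Ps xs :
  (forall l, l \in L -> (l <= P)%VS -> in_some Ps l -> l \in xs) ->
  (nb_in L P + count (in_some Ps) L <= count (in_some (P :: Ps)) L + size xs)%N.
Proof.
move=> overlap; apply: count_predU_ge.
by apply: count_le_size => // l lL /andP[]; exact: overlap.
Qed.

Section Pencil.
Variables a b : PGspace F.
Hypotheses (aL : a \in L) (bL : b \in L) (dX : \dim (a :&: b) = 1%N).
Local Notation X := (a :&: b)%VS.
Local Notation pi := (a + b)%VS.

Let neq_ab : a != b.
Proof. by apply: contra_eq_neq dX => <-; rewrite capvv (Llines _ aL). Qed.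

Let dim_pi : \dim pi = 3%N.
Proof. by have := dimv_sum_cap a b; rewrite dX (Llines _ aL) (Llines _ bL); nat_lia. Qed.

Let nb_in_pi : nb_in L pi = q.+1.
Proof. by apply: (nb_in_plane dim_pi aL bL neq_ab); rewrite ?addvSl ?addvSr. Qed.

(* A line n through X outside pi would leave exactly q lines of the solid
   <pi, n> off pi, all lying in every plane <c, n> with c a line of pi through X;
   but <a, n> and <b, n> meet only in n. *)
Section Line.
Variable n : PGspace F.
Hypotheses (nL : n \in L) (Xn : (X <= n)%VS).

Let dim_off_span (n_pi : ~~ (n <= pi)%VS) : \dim (pi + n) = 4%N.
Proof.
have dcap : \dim (pi :&: n) = 1%N.
  have := dimvS (capvSr pi n); have : (X <= pi :&: n)%VS.
    by rewrite subv_cap Xn (subv_trans (capvSl a b) (addvSl a b)).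
  move=> /dimvS; rewrite dX (Llines _ nL) => ge1 le2.
  suff : \dim (pi :&: n) != 2%N by nat_lia.
  apply: contra n_pi => /eqP d2.
  by rewrite -(subv_eq_dim (capvSr pi n)) ?d2 ?Llines // capvSl.
by have := dimv_sum_cap pi n; rewrite dcap dim_pi (Llines _ nL); nat_lia.
Qed.

Let count_off_plane (n_pi : ~~ (n <= pi)%VS) :
  count (fun l => (l <= pi + n)%VS && ~~ (l <= pi)%VS) L = q.
Proof.
have split := nb_in_split L (addvSl pi n); rewrite nb_in_pi in split.
have : (1 <= count (fun l => (l <= pi + n)%VS && ~~ (l <= pi)%VS) L)%N.
  by apply: (size_le_count _ _ [:: n]) => // x; rewrite inE => /eqP->; rewrite addvSr n_pi nL.
have := nb_in_solid (dim_off_span n_pi); rewrite split; nat_lia.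
Qed.

Let count_off_plane_in_span {c} (n_pi : ~~ (n <= pi)%VS) :
  c \in L -> (c <= pi)%VS -> (X <= c)%VS ->
  (q <= count (fun l => (l <= c + n)%VS && ~~ (l <= pi)%VS) L)%N.
Proof.
move=> cL cpi Xc.
have neq_cn : c != n by apply: contraNneq n_pi => <-.
have dim_cn : \dim (c + n) = 3%N.
  by apply: (dimv_add_lines_meet (Llines _ cL) (Llines _ nL) neq_cn dX Xc Xn).
have span : (c + n + pi)%VS = (pi + n)%VS.
  by apply: subv_eq_dim; [subv_span | apply: dimvS; subv_span].
have cap : ((c + n) :&: pi)%VS = c.
  symmetry; apply: subv_eq_dim; first by rewrite subv_cap addvSl cpi.
  have := dimv_sum_cap (c + n) pi.
  by rewrite span dim_off_span // dim_cn dim_pi (Llines _ cL); nat_lia.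
have := nb_in_predI L (c + n) (fun l => (l <= pi)%VS).
rewrite (nb_in_plane dim_cn cL nL neq_cn) ?addvSl ?addvSr //.
suff : (count (fun l => (l <= c + n)%VS && (l <= pi)%VS) L <= 1)%N by nat_lia.
apply: (count_le_size _ _ [:: c]) => // l lL /andP[l_cn l_pi]; rewrite inE.
have : (l <= c)%VS by rewrite -cap subv_cap l_cn l_pi.
by move/subv_eq_dim; rewrite (Llines _ lL) (Llines _ cL) => ->.
Qed.

Let off_plane_sub_span {c} (n_pi : ~~ (n <= pi)%VS) :
  c \in L -> (c <= pi)%VS -> (X <= c)%VS ->
  {in L, forall l, (l <= pi + n)%VS && ~~ (l <= pi)%VS -> (l <= c + n)%VS}.
Proof.
move=> cL cpi Xc l lL off_l; apply/negPn/negP => l_cn.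
have split := count_split (fun l => (l <= pi + n)%VS && ~~ (l <= pi)%VS)
  (fun l => (l <= c + n)%VS) L.
rewrite count_off_plane // in split.
have in_span : (count (fun l => (l <= c + n)%VS && ~~ (l <= pi)%VS) L <=
        count (fun l => (l <= pi + n)%VS && ~~ (l <= pi)%VS && (l <= c + n)%VS) L)%N.
  apply: sub_count => x /andP[x_cn ->]; rewrite x_cn !andbT.
  by apply: (subv_trans x_cn); subv_span.
have := count_off_plane_in_span n_pi cL cpi Xc.
suff : (0 < count (fun l =>
  (l <= pi + n)%VS && ~~ (l <= pi)%VS && ~~ (l <= c + n)%VS) L)%N by nat_lia.
by rewrite -has_count; apply/hasP; exists l; rewrite // off_l.
Qed.

Lemma pencil_line_sub_plane : (n <= pi)%VS.
Proof.
apply/negPn/negP => n_pi.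
have [l lL /andP[/andP[l_an l_pi] neq_ln]] :
    exists2 l, l \in L & (l <= a + n)%VS && ~~ (l <= pi)%VS && (l != n).
  apply/hasP/negPn/negP => none.
  have := count_off_plane_in_span n_pi aL (addvSl a b) (capvSl a b).
  suff : (count (fun l => (l <= a + n)%VS && ~~ (l <= pi)%VS) L <= 1)%N by nat_lia.
  apply: (count_le_size _ _ [:: n]) => // x xL x_an; rewrite inE.
  by apply: contraR none => neq_xn; apply/hasP; exists x; rewrite ?x_an.
have l_bn : (l <= b + n)%VS.
  apply: (off_plane_sub_span n_pi bL (addvSr a b) (capvSr a b)) => //.
  by rewrite l_pi andbT; apply: (subv_trans l_an); subv_span.
have meet_n : ((a + n) :&: (b + n))%VS = n.
  have dn := Llines _ nL.
  have dan : \dim (a + n) = 3%N.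
    apply: (dimv_add_lines_meet (Llines _ aL) dn _ dX (capvSl a b) Xn).
    by apply: contraNneq n_pi => <-; exact: addvSl.
  have dbn : \dim (b + n) = 3%N.
    apply: (dimv_add_lines_meet (Llines _ bL) dn _ dX (capvSr a b) Xn).
    by apply: contraNneq n_pi => <-; exact: addvSr.
  have span : (a + n + (b + n))%VS = (pi + n)%VS by apply/subv_anti/andP; split; subv_span.
  symmetry; apply: subv_eq_dim; first by rewrite subv_cap !addvSr.
  by have := dimv_sum_cap (a + n) (b + n); rewrite span dim_off_span // dan dbn dn; nat_lia.
move: neq_ln; rewrite (subv_eq_dim (_ : (l <= n)%VS)) ?eqxx //.
  by rewrite -meet_n subv_cap l_an l_bn.
by rewrite (Llines _ nL) (Llines _ lL).
Qed.

End Line.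

Lemma pencil l : l \in L -> (l <= pi)%VS -> (X <= l)%VS.
Proof.
move=> lL l_pi.
have through_X : count (fun l => (X <= l)%VS) L = q.+1.
  have := Pt _ dX; rewrite !inE => /orP[/eqP none|/eqP //].
  suff : (0 < count (fun l => (X <= l)%VS) L)%N by rewrite none.
  by rewrite -has_count; apply/hasP; exists a; rewrite ?capvSl.
have := nb_in_predI L pi (fun l => (X <= l)%VS); rewrite nb_in_pi.
rewrite (eq_in_count (a2 := fun l => (X <= l)%VS)); last first.
  by move=> n nL /=; apply/andP/idP => [[] //|Xn]; rewrite pencil_line_sub_plane.
rewrite through_X => split; apply/negPn/negP => nXl.
suff : (0 < count (fun l => (l <= pi)%VS && ~~ (X <= l)%VS) L)%N by nat_lia.
by rewrite -has_count; apply/hasP; exists l; rewrite ?l_pi.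
Qed.

End Pencil.

Section Corner.
Context {A B C : PGspace F}.
Hypotheses (dB : \dim B = 1%N) (ABL : (A + B)%VS \in L) (BCL : (B + C)%VS \in L).
Hypothesis neq_sides : (A + B)%VS != (B + C)%VS.
Local Notation plane := (A + B + (B + C))%VS.

Lemma corner_meet : ((A + B) :&: (B + C))%VS = B.
Proof.
exact: (lines_meet_point (Llines _ ABL) (Llines _ BCL) neq_sides dB
  (addvSr A B) (addvSl B C)).
Qed.

Lemma corner_dim : \dim plane = 3%N.
Proof.
exact: (dimv_add_lines_meet (Llines _ ABL) (Llines _ BCL) neq_sides dB
  (addvSr A B) (addvSl B C)).
Qed.

Lemma corner_nb_in : nb_in L plane = q.+1.
Proof. by apply: (nb_in_plane corner_dim ABL BCL neq_sides); rewrite ?addvSl ?addvSr. Qed.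

Lemma corner_pencil l : l \in L -> (l <= plane)%VS -> (B <= l)%VS.
Proof.
move=> lL l_plane; rewrite -{1}corner_meet.
by apply: (pencil _ _ ABL BCL) => //; rewrite corner_meet.
Qed.

Lemma corner_far {D} : (C + D)%VS \in L -> (B + C)%VS != (C + D)%VS -> ~~ (D <= plane)%VS.
Proof.
move=> CDL; apply: contra => D_plane; apply/eqP; symmetry.
apply: (line_eq_add CDL BCL); last exact: addvSl.
by apply: corner_pencil => //; subv_span.
Qed.

Lemma corner_far_rev {D} : (D + A)%VS \in L -> (D + A)%VS != (A + B)%VS -> ~~ (D <= plane)%VS.
Proof.
move=> DAL; apply: contra => D_plane; apply/eqP.
apply: (line_eq_add DAL ABL); first exact: addvSr.
by apply: corner_pencil => //; subv_span.
Qed.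

End Corner.

Section Pentagon.
Variables Q0 Q1 Q2 Q3 Q4 : PGspace F.
Hypotheses (dQ0 : \dim Q0 = 1%N) (dQ1 : \dim Q1 = 1%N) (dQ2 : \dim Q2 = 1%N)
  (dQ3 : \dim Q3 = 1%N) (dQ4 : \dim Q4 = 1%N).
Hypotheses (L01 : (Q0 + Q1)%VS \in L) (L12 : (Q1 + Q2)%VS \in L) (L23 : (Q2 + Q3)%VS \in L)
  (L34 : (Q3 + Q4)%VS \in L) (L40 : (Q4 + Q0)%VS \in L).
Hypotheses (n0 : (Q4 + Q0)%VS != (Q0 + Q1)%VS) (n1 : (Q0 + Q1)%VS != (Q1 + Q2)%VS)
  (n2 : (Q1 + Q2)%VS != (Q2 + Q3)%VS) (n3 : (Q2 + Q3)%VS != (Q3 + Q4)%VS)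
  (n4 : (Q3 + Q4)%VS != (Q4 + Q0)%VS).

Local Notation pl0 := (Q4 + Q0 + (Q0 + Q1))%VS.
Local Notation pl1 := (Q0 + Q1 + (Q1 + Q2))%VS.
Local Notation pl2 := (Q1 + Q2 + (Q2 + Q3))%VS.
Local Notation pl3 := (Q2 + Q3 + (Q3 + Q4))%VS.
Local Notation pl4 := (Q3 + Q4 + (Q4 + Q0))%VS.
Local Notation planes := [:: pl0; pl1; pl2; pl3; pl4].
Local Notation span5 := (Q0 + Q1 + Q2 + Q3 + Q4)%VS.

Let pencil0 := corner_pencil dQ0 L40 L01 n0.
Let pencil1 := corner_pencil dQ1 L01 L12 n1.
Let pencil2 := corner_pencil dQ2 L12 L23 n2.
Let pencil3 := corner_pencil dQ3 L23 L34 n3.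
Let pencil4 := corner_pencil dQ4 L34 L40 n4.

Let far02 : ~~ (Q2 <= pl0)%VS := corner_far dQ0 L40 L01 n0 L12 n1.
Let far13 : ~~ (Q3 <= pl1)%VS := corner_far dQ1 L01 L12 n1 L23 n2.
Let far24 : ~~ (Q4 <= pl2)%VS := corner_far dQ2 L12 L23 n2 L34 n3.
Let far03 : ~~ (Q3 <= pl0)%VS := corner_far_rev dQ0 L40 L01 n0 L34 n4.
Let far14 : ~~ (Q4 <= pl1)%VS := corner_far_rev dQ1 L01 L12 n1 L40 n0.

Lemma dim_pentagon_span : \dim span5 = 5%N.
Proof.
have dim_solid : \dim (pl0 + Q2) = 4%N by rewrite dimv_add_point // corner_dim.
have far_solid : ~~ (Q3 <= pl0 + Q2)%VS.
  apply/negP => Q3_solid.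
  have off_pl0 : (q.+1 <= count (fun l => (l <= pl0 + Q2)%VS && ~~ (l <= pl0)%VS) L)%N.
    rewrite -(corner_nb_in dQ2 L12 L23 n2); apply: sub_in_count => l lL l_pl2.
    rewrite (subv_trans l_pl2) /=; last by subv_span.
    by apply: contra far02 => l_pl0; apply: subv_trans l_pl0; exact: pencil2.
  have := Sd _ dim_solid.
  rewrite (nb_in_split L (addvSl pl0 Q2)) (corner_nb_in dQ0 L40 L01 n0).
  by rewrite !inE => /or4P[]/eqP; nat_lia.
have -> : span5 = (pl0 + Q2 + Q3)%VS by apply/subv_anti/andP; split; subv_span.
by rewrite dimv_add_point // dim_solid.
Qed.

Lemma pentagon_planes_count : (5 * q <= count (in_some planes) L)%N.
Proof.
have step4 : (nb_in L pl4 + count (in_some [::]) L <= count (in_some [:: pl4]) L + 0)%N.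
  exact: (count_in_some_cons _ _ [::]).
have step3 : (nb_in L pl3 + count (in_some [:: pl4]) L <=
              count (in_some [:: pl3; pl4]) L + 1)%N.
  apply: (count_in_some_cons _ _ [:: Q3 + Q4]%VS) => l lL l3; rewrite /in_some /= orbF => l4.
  by rewrite inE (line_eq_add lL L34 (pencil3 _ lL l3) (pencil4 _ lL l4)).
have step2 : (nb_in L pl2 + count (in_some [:: pl3; pl4]) L <=
              count (in_some [:: pl2; pl3; pl4]) L + 1)%N.
  apply: (count_in_some_cons _ _ [:: Q2 + Q3]%VS) => l lL l2; rewrite /in_some /= orbF.
  case/orP => [l3|l4].
    by rewrite inE (line_eq_add lL L23 (pencil2 _ lL l2) (pencil3 _ lL l3)).
  by case/negP: far24; apply: subv_trans l2; exact: pencil4.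
have step1 : (nb_in L pl1 + count (in_some [:: pl2; pl3; pl4]) L <=
              count (in_some [:: pl1; pl2; pl3; pl4]) L + 1)%N.
  apply: (count_in_some_cons _ _ [:: Q1 + Q2]%VS) => l lL l1; rewrite /in_some /= orbF.
  case/or3P => [l2|l3|l4].
  - by rewrite inE (line_eq_add lL L12 (pencil1 _ lL l1) (pencil2 _ lL l2)).
  - by case/negP: far13; apply: subv_trans l1; exact: pencil3.
  - by case/negP: far14; apply: subv_trans l1; exact: pencil4.
have step0 : (nb_in L pl0 + count (in_some [:: pl1; pl2; pl3; pl4]) L <=
              count (in_some planes) L + 2)%N.
  apply: (count_in_some_cons _ _ [:: Q0 + Q1; Q4 + Q0]%VS) => l lL l0.
  rewrite /in_some /= orbF.
  case/or4P => [l1|l2|l3|l4].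
  - by rewrite inE (line_eq_add lL L01 (pencil0 _ lL l0) (pencil1 _ lL l1)) eqxx.
  - by case/negP: far02; apply: subv_trans l0; exact: pencil2.
  - by case/negP: far03; apply: subv_trans l0; exact: pencil3.
  - by rewrite !inE (line_eq_add lL L40 (pencil4 _ lL l4) (pencil0 _ lL l0)) eqxx orbT.
move: step0 step1 step2 step3 step4.
rewrite (corner_nb_in dQ0 L40 L01 n0) (corner_nb_in dQ1 L01 L12 n1).
rewrite (corner_nb_in dQ2 L12 L23 n2) (corner_nb_in dQ3 L23 L34 n3).
by rewrite (corner_nb_in dQ4 L34 L40 n4); nat_lia.
Qed.

Local Notation tau := (Q2 + Q3 + Q0)%VS.

Let Q0_pl0 : (Q0 <= pl0)%VS. Proof. by subv_span. Qed.

Let dim_pl0_cap_side23 : \dim (pl0 :&: (Q2 + Q3)) = 0%N.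
Proof.
have : (\dim span5 <= \dim (pl0 + (Q2 + Q3)))%N by apply: dimvS; subv_span.
rewrite dim_pentagon_span.
have := dimv_sum_cap pl0 (Q2 + Q3).
by rewrite (corner_dim dQ0 L40 L01 n0) (Llines _ L23); nat_lia.
Qed.

Let dim_tau : \dim tau = 3%N.
Proof.
have Q0_side : ~~ (Q0 <= Q2 + Q3)%VS.
  apply/negP => Q0_side; have : (Q0 <= pl0 :&: (Q2 + Q3))%VS by rewrite subv_cap Q0_pl0.
  by move/dimvS; rewrite dim_pl0_cap_side23 dQ0.
by rewrite dimv_add_point // (Llines _ L23).
Qed.

Definition solid_new_line m l : bool :=
  (l <= m + (Q2 + Q3))%VS && ~~ (l <= tau)%VS && (l != m).

Section Opposite.
Context {m : PGspace F}.
Hypotheses (mL : m \in L) (m_pl0 : (m <= pl0)%VS).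
Hypothesis m_sides : m \notin [:: Q4 + Q0; Q0 + Q1]%VS.
Local Notation R := (m + (Q2 + Q3))%VS.

Let Q0_m : (Q0 <= m)%VS := pencil0 _ mL m_pl0.

Lemma dim_opposite_solid : \dim R = 4%N.
Proof.
have : (m :&: (Q2 + Q3) <= pl0 :&: (Q2 + Q3))%VS.
  by rewrite subv_cap capvSr (subv_trans (capvSl _ _) m_pl0).
move/dimvS; rewrite dim_pl0_cap_side23 leqn0 => /eqP cap0.
by have := dimv_sum_cap m (Q2 + Q3); rewrite cap0 (Llines _ mL) (Llines _ L23); nat_lia.
Qed.

Lemma opposite_plane_sub_solid : (tau <= R)%VS. Proof. by subv_span. Qed.

Let R_cap_pl0 : (R :&: pl0)%VS = m.
Proof.
have m_span : (m <= span5)%VS by apply: subv_trans m_pl0 _; subv_span.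
have span : (R + pl0)%VS = span5 by apply/subv_anti/andP; split; subv_span.
symmetry; apply: subv_eq_dim; first by rewrite subv_cap addvSl m_pl0.
have := dimv_sum_cap R pl0.
rewrite span dim_pentagon_span dim_opposite_solid (corner_dim dQ0 L40 L01 n0).
by rewrite (Llines _ mL); nat_lia.
Qed.

Let side_notin_R A : (Q0 + A)%VS \in L -> (A <= pl0)%VS -> (Q0 + A)%VS != m ->
  ~~ (A <= R)%VS.
Proof.
move=> side_L A_pl0 neq_side; apply: contra neq_side => A_R; apply/eqP; symmetry.
by apply: (line_eq_add mL side_L Q0_m); rewrite -R_cap_pl0 subv_cap A_R.
Qed.

Let Q1_R : ~~ (Q1 <= R)%VS.
Proof.
apply: side_notin_R => //; first by subv_span.
by apply: contraNneq m_sides => <-; rewrite !inE eqxx orbT.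
Qed.

Let Q4_R : ~~ (Q4 <= R)%VS.
Proof.
apply: side_notin_R; rewrite 1?addvC //; first by subv_span.
by apply: contraNneq m_sides => <-; rewrite !inE eqxx.
Qed.

Lemma count_solid_new_line : (q.-1 <= count (solid_new_line m) L)%N.
Proof.
have neq_m_side : m != (Q2 + Q3)%VS.
  by apply: contraNneq far02 => m_side; apply: subv_trans m_pl0; rewrite m_side addvSl.
have m_tau : ~~ (m <= tau)%VS.
  apply/negP => m_tau; have : (R <= tau)%VS by rewrite subv_add m_tau andTb; subv_span.
  by move/dimvS; rewrite dim_opposite_solid dim_tau.
have split := nb_in_split L opposite_plane_sub_solid.
have nb_R : (2 <= nb_in L R)%N.
  apply: (size_le_count _ _ [:: m; Q2 + Q3]%VS); first by rewrite /= inE neq_m_side.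
  by move=> x; rewrite !inE => /orP[]/eqP->; rewrite ?addvSl ?addvSr ?mL ?L23.
have nb_tau : (1 <= nb_in L tau)%N.
  apply: (size_le_count _ _ [:: Q2 + Q3]%VS) => // x.
  by rewrite inE => /eqP->; rewrite addvSl L23.
have off_m : (1 <= count (fun l => (l <= R)%VS && ~~ (l <= tau)%VS) L)%N.
  by apply: (size_le_count _ _ [:: m]) => // x; rewrite inE => /eqP->; rewrite addvSl m_tau mL.
have := count_split (fun l => (l <= R)%VS && ~~ (l <= tau)%VS) (fun l => l != m) L.
have : (count (fun l => (l <= R)%VS && ~~ (l <= tau)%VS && ~~ (l != m)) L <= 1)%N.
  by apply: (count_le_size _ _ [:: m]) => // x _; rewrite negbK inE => /andP[].
have := Sd _ dim_opposite_solid; have := Pl _ dim_tau; rewrite /solid_new_line !inE.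
by move=> /or3P[]/eqP ? /or4P[]/eqP ?; nat_lia.
Qed.

Lemma solid_new_line_planes {l} : l \in L -> solid_new_line m l ->
  ~~ in_some planes l.
Proof.
move=> lL /andP[/andP[l_R l_tau] neq_lm]; rewrite /in_some /= orbF !negb_or.
have neq_l_side : l != (Q2 + Q3)%VS by apply: contraNneq l_tau => ->; exact: addvSl.
have dl := Llines _ lL; have dside := Llines _ L23.
apply/and5P; split; apply/negP => l_pl.
- move: neq_lm; rewrite (subv_eq_dim (_ : (l <= m)%VS)) ?eqxx //.
    by rewrite -R_cap_pl0 subv_cap l_R.
  by rewrite dl (Llines _ mL).
- by case/negP: Q1_R; apply: subv_trans l_R; exact: pencil1.
- have pl2_l : pl2 = (l + (Q2 + Q3))%VS.
    by rewrite (add_lines_plane dl dside neq_l_side (corner_dim dQ2 L12 L23 n2)) //; subv_span.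
  have pl2_R : (pl2 <= R)%VS by rewrite pl2_l subv_add l_R andTb; subv_span.
  by case/negP: Q1_R; apply: subv_trans pl2_R; subv_span.
- have pl3_l : pl3 = (l + (Q2 + Q3))%VS.
    by rewrite (add_lines_plane dl dside neq_l_side (corner_dim dQ3 L23 L34 n3)) //; subv_span.
  have pl3_R : (pl3 <= R)%VS by rewrite pl3_l subv_add l_R andTb; subv_span.
  by case/negP: Q4_R; apply: subv_trans pl3_R; subv_span.
- by case/negP: Q4_R; apply: subv_trans l_R; exact: pencil4.
Qed.

End Opposite.

Lemma solid_new_line_disjoint m1 m2 l : m1 \in L -> m2 \in L ->
  (m1 <= pl0)%VS -> (m2 <= pl0)%VS -> m1 != m2 ->
  solid_new_line m1 l -> solid_new_line m2 l -> False.
Proof.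
move=> m1L m2L m1_pl0 m2_pl0 neq_m12 /andP[/andP[l_R1 l_tau] _] /andP[/andP[l_R2 _] _].
have span_m12 : (m1 + m2)%VS = pl0.
  exact: (add_lines_plane (Llines _ m1L) (Llines _ m2L) neq_m12 (corner_dim dQ0 L40 L01 n0)).
have m1_span : (m1 <= span5)%VS by apply: subv_trans m1_pl0 _; subv_span.
have m2_span : (m2 <= span5)%VS by apply: subv_trans m2_pl0 _; subv_span.
have span : (m1 + (Q2 + Q3) + (m2 + (Q2 + Q3)))%VS = span5.
  apply/subv_anti/andP; split; first by subv_span.
  have pl0_span : (pl0 <= m1 + (Q2 + Q3) + (m2 + (Q2 + Q3)))%VS.
    by rewrite -span_m12; subv_span.
  by apply: subv_trans (_ : span5 <= pl0 + (Q2 + Q3))%VS _; subv_span.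
have meet : ((m1 + (Q2 + Q3)) :&: (m2 + (Q2 + Q3)))%VS = tau.
  symmetry; apply: subv_eq_dim.
    by rewrite subv_cap !opposite_plane_sub_solid.
  have := dimv_sum_cap (m1 + (Q2 + Q3)) (m2 + (Q2 + Q3)).
  by rewrite span dim_pentagon_span !dim_opposite_solid // dim_tau; nat_lia.
by move: l_tau; rewrite -meet subv_cap l_R1 l_R2.
Qed.

Lemma pentagon_span_count : (q ^ 2 + 3 * q + 1 <= nb_in L span5)%N.
Proof.
have planes_count := pentagon_planes_count.
set sides := [:: Q4 + Q0; Q0 + Q1]%VS.
set ms := [seq m <- L | (m <= pl0)%VS && ~~ (m \in sides)].
have ms_spec m : m \in ms -> [/\ m \in L, (m <= pl0)%VS & m \notin sides].
  by rewrite mem_filter => /andP[/andP[]].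
have size_ms : (q.-1 <= size ms)%N.
  have := nb_in_predI L pl0 (fun m => m \in sides); rewrite (corner_nb_in dQ0 L40 L01 n0).
  have : (count (fun m => (m <= pl0)%VS && (m \in sides)) L <= 2)%N.
    by apply: (count_le_size _ _ sides) => // m _ /andP[].
  by rewrite /ms size_filter; nat_lia.
pose new l := has (fun m => solid_new_line m l) ms.
have count_new : (q.-1 * size ms <= count new L)%N.
  rewrite count_has_disjoint ?filter_uniq //; last first.
    move=> m1 m2 l /ms_spec[m1L m1_pl0 _] /ms_spec[m2L m2_pl0 _] neq_m12.
    exact: solid_new_line_disjoint.
  by apply: sum_ge_size => m /ms_spec[mL m_pl0 m_sides]; exact: count_solid_new_line.
have count_union :
    count (predU (in_some planes) new) L = (count (in_some planes) L + count new L)%N.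
  apply: count_predU_disjoint => l lL l_planes /hasP[m /ms_spec[mL m_pl0 m_sides] l_new].
  by move: l_planes; apply/negP; apply: (solid_new_line_planes mL m_pl0 m_sides lL).
have union_span : (count (predU (in_some planes) new) L <= nb_in L span5)%N.
  apply: sub_in_count => l lL /orP[|/hasP[m /ms_spec[mL m_pl0 _] /andP[/andP[l_R _] _]]].
    by rewrite /in_some /= orbF => /or4P[|||/orP[]] l_pl; apply: subv_trans l_pl _; subv_span.
  have m_span : (m <= span5)%VS by apply: subv_trans m_pl0 _; subv_span.
  by apply: subv_trans l_R _; subv_span.
have := leq_mul (leqnn q.-1) size_ms; have := predn_sqr (ltnW q_gt1).
by nat_lia.
Qed.

End Pentagon.

Lemma pentagon_span {f : 'I_5 -> PGspace F} : (forall i, f i \in L) -> pentagon f ->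
  exists S : PGspace F, \dim S = 5%N /\ (q ^ 2 + 3 * q + 1 <= nb_in L S)%N.
Proof.
move=> fL pf; have [_ [f_meet _]] := pf.
pose i0 : 'I_5 := ord0; pose i1 := ordS i0; pose i2 := ordS i1; pose i3 := ordS i2;
  pose i4 := ordS i3.
have cycle : ordS i4 = i0 by apply: val_inj.
pose P i := (f i :&: f (ordS i))%VS.
have side i : (P i + P (ordS i))%VS = f (ordS i) by rewrite (pentagon_side pf).
have dP i : \dim (P i) = 1%N := f_meet i.
have PL i : (P i + P (ordS i))%VS \in L by rewrite side.
have Pneq i : (P i + P (ordS i))%VS != (P (ordS i) + P (ordS (ordS i)))%VS.
  by rewrite !side; exact: pentagon_neq_next.
(* [ordS i4] and [i0] are equal but not convertible. *)
have PL4 := PL i4; have Pneq3 := Pneq i3; have Pneq4 := Pneq i4.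
rewrite cycle in PL4 Pneq3 Pneq4.
exists (P i0 + P i1 + P i2 + P i3 + P i4)%VS.
by split; [apply: dim_pentagon_span | apply: pentagon_span_count];
  first [assumption | exact: dP | exact: PL | exact: Pneq].
Qed.

End LineSet.

Theorem mainTheorem18 (F : finFieldType) (q : nat) (hF : #|F| = (q ^ 3)%N)
  (L : seq (PGspace F))
  (Luniq : uniq L)
  (Llines : forall l, l \in L -> \dim l = 2%N)
  (Pt : forall P : PGspace F, \dim P = 1%N ->
          count (fun l => (P <= l)%VS) L \in [:: 0%N; q.+1])
  (Pl : forall S : PGspace F, \dim S = 3%N ->
          nb_in L S \in [:: 0%N; 1%N; q.+1])
  (Sd : forall S : PGspace F, \dim S = 4%N ->
          nb_in L S \in [:: 0%N; 1%N; q.+1; (2 * q).+1])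
  (Fd : forall S : PGspace F, \dim S = 5%N ->
          (nb_in L S <= q ^ 2 + 2 * q + 1)%N) :
  ~ exists f : 'I_5 -> PGspace F, (forall i, f i \in L) /\ pentagon f.
Proof.
move=> [f [fL pf]].
have q_gt1 : (1 < q)%N by move: (card_finNzRing_gt1 F); rewrite hF; case: (q) => [|[|]].
have [S [dS nbS]] := pentagon_span Luniq Llines Pt Pl Sd q_gt1 fL pf.
by have := Fd S dS; lia.
Qed.
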